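(* Let $\mathcal{G}$ be an undirected graph on $n$ nodes with (symmetric) adjacency matrix $\boldsymbol{A}\in\mathbb{R}^{n\times n}$, and let $d\ge 1$. Let $s\le \min\{n,d\}-1$ and let $\epsilon_1>\epsilon_2>\cdots>\epsilon_s>0$ be $s$ distinct positive numbers. Let $\boldsymbol{H}\in\mathbb{R}^{n\times d}$ be a solution of the optimization problem $$\boldsymbol{H}=\arg\min_{\boldsymbol{X}\in\mathbb{R}^{n\times d}} E_{\mathcal{G}}(\boldsymbol{X})\quad\text{subject to}\quad \sigma_k(\boldsymbol{X})\ge \epsilon_k \ \text{ for all } k\in\{1,\dots,s\}.$$ Then for every $k\in\{1,\dots,s\}$, the $k$-th principal component of $\boldsymbol{H}$ is $\boldsymbol{z}^{(k+1)}$.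
   Context: For $\boldsymbol{X}\in\mathbb{R}^{n\times d}$ with rows $\boldsymbol{x}_1,\dots,\boldsymbol{x}_n\in\mathbb{R}^d$ (row $i$ assigned to node $i$), the Dirichlet energy is $E_{\mathcal{G}}(\boldsymbol{X})=\sum_{i,j}\boldsymbol{A}_{i,j}\|\boldsymbol{x}_i-\boldsymbol{x}_j\|^2$; for a vector $\boldsymbol{x}\in\mathbb{R}^n$ this is $E_{\mathcal{G}}(\boldsymbol{x})=\sum_{i,j}\boldsymbol{A}_{i,j}(x_i-x_j)^2$. $\sigma_k(\boldsymbol{X})$ denotes the $k$-th largest singular value of $\boldsymbol{X}$. The energy minimizers $\boldsymbol{z}^{(1)},\dots,\boldsymbol{z}^{(n)}\in\mathbb{R}^n$ are defined recursively by $\boldsymbol{z}^{(k)}=\arg\min_{\boldsymbol{z}\in\mathbb{S}^{n-1}} E_{\mathcal{G}}(\boldsymbol{z})$ subject to $\boldsymbol{z}\perp\boldsymbol{z}^{(j)}$ for all $j\le k-1$, where $\mathbb{S}^{n-1}$ is the unit sphere in $\mathbb{R}^n$. The $k$-th principal component of $\boldsymbol{H}$ is the unit eigenvector of $\boldsymbol{C}=\widehat{\boldsymbol{H}}\widehat{\boldsymbol{H}}^\top\in\mathbb{R}^{n\times n}$ corresponding to its $k$-th largest eigenvalue, where $\widehat{\boldsymbol{H}}=\boldsymbol{H}-\frac1n\boldsymbol{1}\boldsymbol{1}^\top\boldsymbol{H}$ is the column-centered matrix and $\boldsymbol{1}$ is the all-ones vector. *)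

From HB Require Import structures.
From mathcomp Require Import all_boot all_order all_algebra.
From mathcomp Require Import reals.
Set Implicit Arguments. Unset Strict Implicit. Unset Printing Implicit Defensive.
Import Order.TTheory GRing.Theory Num.Theory.
Local Open Scope ring_scope.

Section Defs.
Variable R : realType.

Definition is_adjacency (n : nat) (A : 'M[R]_n) : Prop :=
  A^T = A /\ forall i j, A i j = 0 \/ A i j = 1.

Definition energy (n m : nat) (A : 'M[R]_n) (X : 'M[R]_(n, m)) : R :=
  \sum_(i < n) \sum_(j < n) A i j * \sum_(l < m) (X i l - X j l) ^+ 2.

Definition unit_vec (n : nat) (z : 'cV[R]_n) : Prop := z^T *m z = 1%:M.
Definition orth (n : nat) (y z : 'cV[R]_n) : Prop := y^T *m z = 0.

Definition energy_minimizers (n : nat) (A : 'M[R]_n) (z : nat -> 'cV[R]_n) : Prop :=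
  forall k, (1 <= k <= n)%N ->
    [/\ unit_vec (z k),
        (forall j, (1 <= j < k)%N -> orth (z j) (z k)) &
        forall y : 'cV[R]_n, unit_vec y ->
          (forall j, (1 <= j < k)%N -> orth (z j) y) ->
          energy A (z k) <= energy A y].

Definition orthogonal_mx (n : nat) (U : 'M[R]_n) : Prop := U^T *m U = 1%:M.

Definition is_svd (n d : nat) (X : 'M[R]_(n, d)) (U : 'M[R]_n) (S : 'M[R]_(n, d))
    (V : 'M[R]_d) : Prop :=
  [/\ orthogonal_mx U, orthogonal_mx V, X = U *m S *m V^T,
      (forall i j, val i <> val j -> S i j = 0) /\
      (forall i j, val i = val j -> 0 <= S i j) &
      (forall i i' j j', val i = val i' -> val j = val j' -> (val i <= val j)%N ->
          S j j' <= S i i')].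

Definition singval (n d : nat) (X : 'M[R]_(n, d)) (k : nat) (sigma : R) : Prop :=
  exists U S V, is_svd X U S V /\
    exists i j, [/\ val i = k.-1, val j = k.-1, (1 <= k)%N & S i j = sigma].

(* lam is the k-th largest eigenvalue (with multiplicity, 1-indexed) of the
   symmetric matrix C, read off an orthogonal diagonalization with sorted
   eigenvalues *)
Definition kth_eigenvalue (n : nat) (C : 'M[R]_n) (k : nat) (lam : R) : Prop :=
  exists (U : 'M[R]_n) (dv : 'rV[R]_n),
    [/\ orthogonal_mx U, C = U *m diag_mx dv *m U^T,
        (forall i j : 'I_n, (i <= j)%N -> dv 0 j <= dv 0 i) &
        exists i : 'I_n, val i = k.-1 /\ (1 <= k)%N /\ dv 0 i = lam].

Definition centered (n d : nat) (H : 'M[R]_(n, d)) : 'M[R]_(n, d) :=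
  H - (n%:R)^-1 *: (const_mx 1 *m H).

Definition cov (n d : nat) (H : 'M[R]_(n, d)) : 'M[R]_n :=
  centered H *m (centered H)^T.

Definition principal_component (n d : nat) (H : 'M[R]_(n, d)) (k : nat)
    (v : 'cV[R]_n) : Prop :=
  unit_vec v /\ exists lam, kth_eigenvalue (cov H) k lam /\ cov H *m v = lam *: v.

Definition feasible (n d s : nat) (eps : nat -> R) (X : 'M[R]_(n, d)) : Prop :=
  forall k, (1 <= k <= s)%N -> exists sigma, singval X k sigma /\ eps k <= sigma.

End Defs.

(* Left multiplication by an orthogonal matrix preserves the singular values,
   so H also minimizes E(O H) = 2 tr (H^T O^T L O H) over orthogonal O, where L
   is the graph Laplacian. Rotating H in the plane of two eigenvectors u, v of L
   changes the energy by 2 (l_v - l_u) (s^2 (|uH|^2 - |vH|^2) - 2 c s <uH, vH>);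
   small angles force <uH, vH> = 0 when l_u <> l_v, and the quarter turn shows
   that l_u < l_v implies |uH| >= |vH|. Since the constant vector 1 satisfies
   1 L = 0 and 1 C = 0, the first fact makes the covariance C commute with L, so
   they share an orthonormal eigenbasis containing the normalized 1. Sorted by
   increasing Laplacian eigenvalue, with 1 first and ties broken by decreasing
   variance, this basis consists of successive energy minimizers, and by the
   second fact it lists the remaining eigenvectors of C by decreasing
   eigenvalue. *)

From HB Require Import structures.
From mathcomp Require Import all_boot all_order all_algebra perm.
From mathcomp Require Import reals complex ring lra zify.
Import Order.TTheory GRing.Theory Num.Theory.
Set Implicit Arguments. Unset Strict Implicit. Unset Printing Implicit Defensive.
Local Open Scope ring_scope.

Section InnerProduct.
Variable R : realFieldType.

Definition dotr n (x y : 'rV[R]_n) : R := (x *m y^T) 0 0.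

Lemma dotr_mx11 n (x y : 'rV[R]_n) : x *m y^T = (dotr x y)%:M.
Proof. exact: mx11_scalar. Qed.

Lemma mulmx_col_dotr n (x : 'rV[R]_n) (y : 'cV[R]_n) : x *m y = (dotr x y^T)%:M.
Proof. by rewrite -dotr_mx11 trmxK. Qed.

Lemma dotrC n (x y : 'rV[R]_n) : dotr x y = dotr y x.
Proof. by rewrite /dotr !mxE; apply: eq_bigr => k _; rewrite !mxE mulrC. Qed.

Lemma dotrE n (x y : 'rV[R]_n) : dotr x y = \sum_k x 0 k * y 0 k.
Proof. by rewrite /dotr mxE; apply: eq_bigr => k _; rewrite mxE. Qed.

Lemma dotr_ge0 n (x : 'rV[R]_n) : 0 <= dotr x x.
Proof. by rewrite dotrE; apply: sumr_ge0 => k _; rewrite -expr2 sqr_ge0. Qed.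

Lemma dotr_eq0 n (x : 'rV[R]_n) : (dotr x x == 0) = (x == 0).
Proof.
apply/idP/eqP => [|->]; last by rewrite dotrE big1 // => k _; rewrite mxE mul0r.
rewrite dotrE psumr_eq0 => [/allP x0|k _]; last by rewrite -expr2 sqr_ge0.
apply/rowP => k; have := x0 k (mem_index_enum k).
by rewrite -expr2 sqrf_eq0 mxE => /eqP.
Qed.

Lemma dotr_gt0 n (x : 'rV[R]_n) : (0 < dotr x x) = (x != 0).
Proof. by rewrite lt_def dotr_eq0 dotr_ge0 andbT. Qed.

Lemma dotrDl n (x x' y : 'rV[R]_n) : dotr (x + x') y = dotr x y + dotr x' y.
Proof. by rewrite /dotr mulmxDl mxE. Qed.

Lemma dotrZl n a (x y : 'rV[R]_n) : dotr (a *: x) y = a * dotr x y.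
Proof. by rewrite /dotr -scalemxAl mxE. Qed.

Lemma dotrNl n (x y : 'rV[R]_n) : dotr (- x) y = - dotr x y.
Proof. by rewrite /dotr mulNmx mxE. Qed.

Lemma dotr0l n (y : 'rV[R]_n) : dotr 0 y = 0.
Proof. by rewrite /dotr mul0mx mxE. Qed.

Lemma dotr_suml n (I : finType) (F : I -> 'rV[R]_n) (y : 'rV[R]_n) :
  dotr (\sum_i F i) y = \sum_i dotr (F i) y.
Proof. by rewrite /dotr mulmx_suml summxE. Qed.

Lemma dotrDr n (x y y' : 'rV[R]_n) : dotr x (y + y') = dotr x y + dotr x y'.
Proof. by rewrite dotrC dotrDl !(dotrC x). Qed.

Lemma dotrZr n a (x y : 'rV[R]_n) : dotr x (a *: y) = a * dotr x y.
Proof. by rewrite dotrC dotrZl dotrC. Qed.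

Lemma dotr0r n (x : 'rV[R]_n) : dotr x 0 = 0.
Proof. by rewrite dotrC dotr0l. Qed.

Lemma dotr_mulmx_sym n (M : 'M[R]_n) (x y : 'rV[R]_n) : M^T = M ->
  dotr (x *m M) y = dotr (y *m M) x.
Proof.
move=> Msym; rewrite /dotr -[in RHS](trmxK (y *m M *m x^T)) [RHS]mxE.
by rewrite !trmx_mul trmxK Msym mulmxA.
Qed.

Lemma dotr_trmx n k (v : 'rV[R]_n) (F : 'M[R]_(k, n)) (i : 'I_k) :
  (v *m F^T) 0 i = dotr v (row i F).
Proof. by rewrite /dotr !mxE; apply: eq_bigr => j _; rewrite !mxE. Qed.

Lemma dotr_lincomb2 n (x y : R) (a b : 'rV[R]_n) :
  dotr (x *: a + y *: b) (x *: a + y *: b) =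
  x ^+ 2 * dotr a a + 2 * x * y * dotr a b + y ^+ 2 * dotr b b.
Proof. by rewrite !dotrDl !dotrDr !dotrZl !dotrZr (dotrC b a); ring. Qed.

Lemma stablemx_rayleigh n (M : 'M[R]_n) (v : 'rV[R]_n) :
  stablemx v M -> dotr v v = 1 -> v *m M = dotr (v *m M) v *: v.
Proof. by move=> /sub_rVP[a ->] vv; rewrite dotrZl vv mulr1. Qed.

End InnerProduct.

Section OrthonormalBasis.
Variable R : realFieldType.

Definition onb n (f : 'I_n -> 'rV[R]_n) := forall i j, dotr (f i) (f j) = (i == j)%:R.

Variables (n : nat) (f : 'I_n -> 'rV[R]_n).
Hypothesis f_onb : onb f.

Lemma mulmx_outer p (v u : 'rV[R]_n) (w : 'M[R]_(1, p)) :
  v *m (u^T *m w) = dotr v u *: w.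
Proof. by rewrite mulmxA dotr_mx11 mul_scalar_mx. Qed.

Lemma onb_sum_outer : \sum_m (f m)^T *m f m = 1%:M.
Proof.
set F : 'M[R]_n := \matrix_i f i.
have FFt : F *m F^T = 1%:M.
  apply/matrixP => a b; rewrite !mxE -f_onb /dotr !mxE; apply: eq_bigr => k _.
  by rewrite !mxE.
rewrite -(mulmx1C FFt); apply/matrixP => a b; rewrite summxE !mxE.
by apply: eq_bigr => m _; rewrite !mxE big_ord1 !mxE.
Qed.

Lemma onb_expansion (v : 'rV[R]_n) : v = \sum_m dotr v (f m) *: f m.
Proof.
rewrite -{1}(mulmx1 v) -onb_sum_outer mulmx_sumr.
by apply: eq_bigr => m _; rewrite mulmx_outer.
Qed.

Lemma onb_parseval (v : 'rV[R]_n) : dotr v v = \sum_m dotr v (f m) ^+ 2.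
Proof.
rewrite {1}[v]onb_expansion dotr_suml; apply: eq_bigr => m _.
by rewrite dotrZl dotrC expr2.
Qed.

Lemma onb_mx_ext p (P Q : 'M[R]_(n, p)) : (forall m, f m *m P = f m *m Q) -> P = Q.
Proof.
move=> PQ; rewrite -(mul1mx P) -(mul1mx Q) -onb_sum_outer !mulmx_suml.
by apply: eq_bigr => m _; rewrite -!mulmxA PQ.
Qed.

End OrthonormalBasis.

Section SymmetricEigen.
Variable R : rcfType.
Local Notation Re := (@complex.Re R).
Local Notation Im := (@complex.Im R).
Local Notation cplx := (map_mx (real_complex R)).

Lemma map_Re_mulmx m n p (w : 'M[R[i]]_(m, n)) (M : 'M[R]_(n, p)) :
  map_mx Re (w *m cplx M) = map_mx Re w *m M.
Proof.
apply/matrixP => i k; rewrite !mxE raddf_sum; apply: eq_bigr => j _.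
by rewrite !mxE; case: (w i j) => a b /=; rewrite mulr0 subr0.
Qed.

Lemma map_Im_mulmx m n p (w : 'M[R[i]]_(m, n)) (M : 'M[R]_(n, p)) :
  map_mx Im (w *m cplx M) = map_mx Im w *m M.
Proof.
apply/matrixP => i k; rewrite !mxE raddf_sum; apply: eq_bigr => j _.
by rewrite !mxE; case: (w i j) => a b /=; rewrite mulr0 add0r.
Qed.

Lemma map_Re_scale m n (om : R[i]) (w : 'M[R[i]]_(m, n)) :
  map_mx Re (om *: w) = Re om *: map_mx Re w - Im om *: map_mx Im w.
Proof.
by apply/matrixP => i k; rewrite !mxE; case: om => a b; case: (w i k) => c d.
Qed.

Lemma map_Im_scale m n (om : R[i]) (w : 'M[R[i]]_(m, n)) :
  map_mx Im (om *: w) = Re om *: map_mx Im w + Im om *: map_mx Re w.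
Proof.
apply/matrixP => i k; rewrite !mxE; case: om => a b; case: (w i k) => c d /=.
by rewrite addrC.
Qed.

Lemma map_ReIm_eq0 m n (w : 'M[R[i]]_(m, n)) :
  (map_mx Re w == 0) && (map_mx Im w == 0) = (w == 0).
Proof.
apply/andP/eqP => [[/eqP/matrixP Re0 /eqP/matrixP Im0]|->]; last by rewrite !map_mx0.
apply/matrixP => i k; move: (Re0 i k) (Im0 i k); rewrite !mxE.
by case: (w i k) => a b /= -> ->.
Qed.

(* With om = a + i b, the real and imaginary parts x, z of w satisfy
   x M = a x - b z and z M = a z + b x, so the symmetry of M gives
   b (|x|^2 + |z|^2) = 0. *)
Lemma sym_eigenvector_ReIm n (M : 'M[R]_n) (w : 'rV[R[i]]_n) om :
  M^T = M -> w != 0 -> w *m cplx M = om *: w ->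
  map_mx Re w *m M = Re om *: map_mx Re w /\ map_mx Im w *m M = Re om *: map_mx Im w.
Proof.
move=> Msym w0 wM; set x := map_mx Re w; set z := map_mx Im w.
have xM : x *m M = Re om *: x - Im om *: z by rewrite -map_Re_mulmx wM map_Re_scale.
have zM : z *m M = Re om *: z + Im om *: x by rewrite -map_Im_mulmx wM map_Im_scale.
suff Im0 : Im om = 0 by rewrite xM zM Im0 !scale0r subr0 addr0.
have := dotr_mulmx_sym x z Msym.
rewrite xM zM dotrDl dotrNl !dotrZl dotrDl !dotrZl (dotrC x z).
set p := dotr z x; set q := dotr x x; set t := dotr z z => e.
have : Im om * (q + t) = (Re om * p + Im om * q) - (Re om * p - Im om * t) by ring.
rewrite e subrr => /eqP; rewrite mulf_eq0 => /orP[/eqP //|].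
have : (x != 0) || (z != 0) by rewrite -negb_and map_ReIm_eq0.
rewrite -!dotr_gt0 /q /t; have := dotr_ge0 x; have := dotr_ge0 z.
by move=> ? ? /orP[] ?; rewrite gt_eqF //; lra.
Qed.

Lemma sym_eigenvector_in n r (M : 'M[R]_n) (W : 'M[R]_(r, n)) :
  M^T = M -> stablemx W M -> W != 0 ->
  exists a, exists2 v : 'rV_n, v != 0 & (v <= W)%MS && (v <= eigenspace M a)%MS.
Proof.
move=> Msym WM W0; set B := row_base W.
have MB : restrictmx W M *m B = B *m M by rewrite mulmxKpV ?stablemx_row_base.
have rW : (0 < \rank W)%N by rewrite lt0n mxrank_eq0.
have [om /eigenvalueP[y yM y0]] := eigenvalue_closed (cplx (restrictmx W M)) rW.
set w := y *m cplx B.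
have w0 : w != 0.
  by rewrite mulmx_free_eq0 // /row_free mxrank_map; exact: row_base_free.
have wM : w *m cplx M = om *: w by rewrite -mulmxA -map_mxM -MB map_mxM mulmxA yM scalemxAl.
have [ReM ImM] := sym_eigenvector_ReIm Msym w0 wM.
have ReW : (map_mx Re w <= W)%MS by rewrite map_Re_mulmx -(eq_row_base W) submxMl.
have ImW : (map_mx Im w <= W)%MS by rewrite map_Im_mulmx -(eq_row_base W) submxMl.
have : (map_mx Re w != 0) || (map_mx Im w != 0) by rewrite -negb_and map_ReIm_eq0.
case/orP=> [Re0 | Im0]; exists (Re om).
  by exists (map_mx Re w); rewrite // ReW; apply/eigenspaceP.
by exists (map_mx Im w); rewrite // ImW; apply/eigenspaceP.
Qed.

End SymmetricEigen.

Lemma stablemx_kermx_tr (F : fieldType) k n (M : 'M[F]_n) (V : 'M[F]_(k, n)) :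
  M^T = M -> stablemx V M -> stablemx (kermx V^T) M.
Proof.
move=> Msym VM; rewrite sub_kermx -mulmxA -[M]Msym -trmx_mul -(mulmxKpV VM).
by rewrite trmx_mul mulmxA mulmx_ker mul0mx.
Qed.

Section CommonEigenbasis.
Variable R : rcfType.

Lemma common_eigenvector_in n r (M1 M2 : 'M[R]_n) (W : 'M[R]_(r, n)) :
  M1^T = M1 -> M2^T = M2 -> comm_mx M1 M2 -> stablemx W M1 -> stablemx W M2 -> W != 0 ->
  exists a b, exists2 u : 'rV_n, u != 0 &
    [&& (u <= W)%MS, (u <= eigenspace M1 a)%MS & (u <= eigenspace M2 b)%MS].
Proof.
move=> M1sym M2sym M12 WM1 WM2 W0.
have [a [v v0 /andP[vW vE]]] := sym_eigenvector_in M1sym WM1 W0.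
set W' := (W :&: eigenspace M1 a)%MS.
have W'M2 : stablemx W' M2.
  rewrite sub_capmx (submx_trans (submxMr _ (capmxSl _ _)) WM2) /=.
  exact: submx_trans (submxMr _ (capmxSr _ _)) (comm_mx_stable_eigenspace _ M12).
have W'0 : W' != 0 by apply: contraNneq v0 => W'0; rewrite -submx0 -W'0 sub_capmx vW.
have [b [u u0 /andP[]]] := sym_eigenvector_in M2sym W'M2 W'0.
by rewrite sub_capmx => /andP[uW uE1] uE2; exists a, b, u; rewrite ?uW ?uE1.
Qed.

Lemma dotr_normalize n (u : 'rV[R]_n) : u != 0 ->
  dotr ((Num.sqrt (dotr u u))^-1 *: u) ((Num.sqrt (dotr u u))^-1 *: u) = 1.
Proof.
rewrite -dotr_gt0 => u0; rewrite dotrZl dotrZr mulrA -expr2 exprVn.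
by rewrite sqr_sqrtr ?ltW // mulVf ?gt_eqF.
Qed.

Definition orthonormal n k (g : nat -> 'rV[R]_n) :=
  forall i j, (i < k)%N -> (j < k)%N -> dotr (g i) (g j) = (i == j)%:R.

Lemma orthonormal_extend n k (M1 M2 : 'M[R]_n) (g : nat -> 'rV[R]_n) :
  M1^T = M1 -> M2^T = M2 -> comm_mx M1 M2 -> (k < n)%N -> orthonormal k g ->
  (forall i, (i < k)%N -> stablemx (g i) M1 && stablemx (g i) M2) ->
  exists2 u : 'rV_n, orthonormal k.+1 (fun i => if i == k then u else g i) &
    stablemx u M1 && stablemx u M2.
Proof.
move=> M1sym M2sym M12 kn g_on g_eig; set G := \matrix_(i < k) g i.
have GM : forall M, (forall i, (i < k)%N -> stablemx (g i) M) -> stablemx G M.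
  move=> M gM; apply/row_subP => i; rewrite row_mul rowK.
  by have := row_sub i G; rewrite rowK; apply: submx_trans (gM _ (ltn_ord i)).
have G'M1 : stablemx (kermx G^T) M1.
  by apply/stablemx_kermx_tr/GM => // i /g_eig/andP[].
have G'M2 : stablemx (kermx G^T) M2.
  by apply/stablemx_kermx_tr/GM => // i /g_eig/andP[].
have G'0 : kermx G^T != 0.
  rewrite -mxrank_eq0 mxrank_ker mxrank_tr -lt0n subn_gt0.
  exact: leq_ltn_trans (rank_leq_row G) kn.
have [a [b [u u0 /and3P[/sub_kermxP uG uM1 uM2]]]] :=
  common_eigenvector_in M1sym M2sym M12 G'M1 G'M2 G'0.
have u_g i : (i < k)%N -> dotr u (g i) = 0.
  by move=> ik; have /rowP/(_ (Ordinal ik)) := uG; rewrite dotr_trmx rowK mxE.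
set c := (Num.sqrt (dotr u u))^-1; exists (c *: u).
  move=> i j; rewrite ltnS leq_eqVlt => /orP[/eqP-> | ik];
    rewrite ltnS leq_eqVlt => /orP[/eqP-> | jk].
  - by rewrite eqxx dotr_normalize.
  - by rewrite eqxx (ltn_eqF jk) eq_sym (ltn_eqF jk) dotrZl u_g // mulr0.
  - by rewrite eqxx (ltn_eqF ik) dotrZr dotrC u_g // mulr0.
  - by rewrite (ltn_eqF ik) (ltn_eqF jk) g_on.
by apply/andP; split; [apply/(eigenvectorP M1); exists a | apply/(eigenvectorP M2); exists b];
  exact: scalemx_sub.
Qed.

Lemma common_eigenbasis n (M1 M2 : 'M[R]_n.+1) (e : 'rV[R]_n.+1) :
  M1^T = M1 -> M2^T = M2 -> comm_mx M1 M2 ->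
  dotr e e = 1 -> stablemx e M1 -> stablemx e M2 ->
  exists f : 'I_n.+1 -> 'rV[R]_n.+1, exists lam1 lam2 : 'I_n.+1 -> R,
    [/\ onb f, f ord0 = e, forall i, f i *m M1 = lam1 i *: f i
      & forall i, f i *m M2 = lam2 i *: f i].
Proof.
move=> M1sym M2sym M12 ee eM1 eM2.
have family k : (0 < k <= n.+1)%N -> exists g : nat -> 'rV[R]_n.+1, [/\ g 0%N = e,
    orthonormal k g & forall i, (i < k)%N -> stablemx (g i) M1 && stablemx (g i) M2].
  elim: k => [|[|k] IHk] /andP[// _ kn].
    exists (fun=> e); split=> [//|[|i] [|j] //|[|i] // _]; exact/andP.
  have [g [g0 g_on g_eig]] := IHk (ltnW kn).
  have [u u_on u_eig] := orthonormal_extend M1sym M2sym M12 kn g_on g_eig.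
  exists (fun i => if i == k.+1 then u else g i); split=> // i.
  by rewrite ltnS leq_eqVlt; case: eqP => // _ /g_eig.
have [g [g0 g_on g_eig]] := family n.+1 (leqnn _).
have g_unit (i : 'I_n.+1) : dotr (g i) (g i) = 1 by rewrite g_on ?eqxx.
exists (fun i => g i), (fun i => dotr (g i *m M1) (g i)), (fun i => dotr (g i *m M2) (g i)).
split=> // [i j|i|i]; first exact: g_on.
  by have /andP[gM1 _] := g_eig i (ltn_ord i); apply: stablemx_rayleigh.
by have /andP[_ gM2] := g_eig i (ltn_ord i); apply: stablemx_rayleigh.
Qed.

End CommonEigenbasis.

Section PlaneRotation.
Variables (R : realFieldType) (n : nat) (f : 'I_n -> 'rV[R]_n).
Hypothesis f_onb : onb f.

Definition plane_rot (i j : 'I_n) (c s : R) : 'M[R]_n :=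
  1%:M + (c - 1) *: ((f i)^T *m f i + (f j)^T *m f j) + s *: ((f i)^T *m f j - (f j)^T *m f i).

Lemma tr_plane_rot i j c s : (plane_rot i j c s)^T = plane_rot i j c (- s).
Proof.
rewrite /plane_rot !raddfD /= !linearZ /= raddfN /= !trmx_mul !trmxK trmx1.
by congr (_ + _); rewrite !scaleNr !scalerN opprK addrC.
Qed.

Lemma onb_mul_plane_rot i j c s m : i != j ->
  f m *m plane_rot i j c s =
  if m == i then c *: f i + s *: f j
  else if m == j then (- s) *: f i + c *: f j else f m.
Proof.
move=> ij; rewrite /plane_rot !mulmxDr mulmx1 -!scalemxAr mulmxDr mulmxBr.
rewrite !mulmx_outer !f_onb; have cv (v : 'rV_n) : v + (c - 1) *: v = c *: v.
  by rewrite scalerBl scale1r addrC subrK.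
case: (eqVneq m i) => [->|mi].
  by rewrite (negbTE ij) !(scale1r, scale0r, addr0, subr0) cv.
case: (eqVneq m j) => [->|mj].
  by rewrite !(scale1r, scale0r, addr0, add0r, sub0r) cv addrC scalerN scaleNr.
by rewrite !(mulr0n, scale0r, addr0, subr0, scaler0).
Qed.

Lemma plane_rot_orthogonal i j c s : i != j -> c ^+ 2 + s ^+ 2 = 1 ->
  (plane_rot i j c s)^T *m plane_rot i j c s = 1%:M.
Proof.
move=> ij cs; have ji : j != i by rewrite eq_sym.
apply: mulmx1C; apply: (onb_mx_ext f_onb) => m.
rewrite mulmxA onb_mul_plane_rot // tr_plane_rot mulmx1.
have sum_sq (v : 'rV[R]_n) : (c ^+ 2 + s ^+ 2) *: v = v by rewrite cs scale1r.
case: (eqVneq m i) => [->|mi]; [|case: (eqVneq m j) => [->|mj]].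
- rewrite mulmxDl -!scalemxAl !onb_mul_plane_rot // !eqxx (negbTE ji).
  by rewrite -[RHS]sum_sq; apply/rowP => k; rewrite !mxE; ring.
- rewrite mulmxDl -!scalemxAl !onb_mul_plane_rot // !eqxx (negbTE ji).
  by rewrite -[RHS]sum_sq; apply/rowP => k; rewrite !mxE; ring.
- by rewrite onb_mul_plane_rot // (negbTE mi) (negbTE mj).
Qed.

End PlaneRotation.

Section Laplacian.
Variables (R : realType) (n : nat) (A : 'M[R]_n).

Definition laplacian : 'M[R]_n := diag_mx (\row_i \sum_k A i k) - A.

Lemma energy_ge0 d (X : 'M[R]_(n, d)) : (forall i j, 0 <= A i j) -> 0 <= energy A X.
Proof.
move=> A_ge0; apply: sumr_ge0 => i _; apply: sumr_ge0 => j _.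
by rewrite mulr_ge0 // sumr_ge0 // => l _; rewrite sqr_ge0.
Qed.

Hypothesis Asym : A^T = A.

Lemma laplacian_sym : laplacian^T = laplacian.
Proof. by rewrite /laplacian linearB /= tr_diag_mx Asym. Qed.

Lemma A_entry_sym i j : A j i = A i j.
Proof. by rewrite -[in LHS]Asym mxE. Qed.

Lemma const_mul_laplacian (c : R) : const_mx c *m laplacian = 0 :> 'rV_n.
Proof.
apply/rowP => k; rewrite !mxE; under eq_bigr do rewrite !mxE.
have deg : \sum_i (\sum_j A i j) *+ (i == k) = \sum_j A k j.
  by rewrite [LHS](bigD1 k) //= eqxx mulr1n [X in _ + X]big1 ?addr0 // => i /negbTE->.
by rewrite -mulr_sumr sumrB deg (eq_bigr _ (fun i _ => A_entry_sym k i)) subrr mulr0.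
Qed.

Lemma dirichlet_laplacian (a : 'I_n -> R) :
  \sum_i \sum_j A i j * (a i - a j) ^+ 2 = 2 * \sum_i \sum_j a i * laplacian i j * a j.
Proof.
have row_form i :
    \sum_j a i * laplacian i j * a j = \sum_j A i j * a i ^+ 2 - \sum_j A i j * a i * a j.
  under eq_bigr do rewrite !mxE mulrBr mulrBl.
  rewrite sumrB; congr (_ - _); last by apply: eq_bigr => j _; ring.
  rewrite [LHS](bigD1 i) //= eqxx mulr1n [X in _ + X]big1 => [|j ji]; last first.
    by rewrite eq_sym (negbTE ji) mulr0n mulr0 mul0r.
  by rewrite addr0 mulr_sumr mulr_suml; apply: eq_bigr => j _; ring.
have sym_sq : \sum_i \sum_j A i j * a j ^+ 2 = \sum_i \sum_j A i j * a i ^+ 2.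
  by rewrite exchange_big; apply: eq_bigr => i _; apply: eq_bigr => j _; rewrite A_entry_sym.
transitivity (\sum_i \sum_j A i j * a i ^+ 2 + \sum_i \sum_j A i j * a j ^+ 2
    - 2 * \sum_i \sum_j A i j * a i * a j).
  rewrite mulr_sumr -!big_split -sumrN -big_split /=; apply: eq_bigr => i _.
  rewrite mulr_sumr -!big_split -sumrN -big_split /=; apply: eq_bigr => j _; ring.
by rewrite sym_sq (eq_bigr _ (fun i _ => row_form i)) sumrB; ring.
Qed.

Lemma energy_trace d (X : 'M[R]_(n, d)) : energy A X = 2 * \tr (X^T *m laplacian *m X).
Proof.
rewrite /energy /mxtrace mulr_sumr.
transitivity (\sum_l \sum_i \sum_j A i j * (X i l - X j l) ^+ 2).
  symmetry; rewrite exchange_big; apply: eq_bigr => i _.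
  by rewrite exchange_big; apply: eq_bigr => j _; rewrite mulr_sumr.
apply: eq_bigr => l _; rewrite dirichlet_laplacian mxE exchange_big /=.
congr (_ * _); apply: eq_bigr => i _; rewrite mxE mulr_suml.
by apply: eq_bigr => j _; rewrite !mxE.
Qed.

End Laplacian.

Section EnergyEigenbasis.
Variables (R : realType) (n : nat) (A : 'M[R]_n).
Hypothesis Asym : A^T = A.
Variables (f : 'I_n -> 'rV[R]_n) (lam : 'I_n -> R).
Hypotheses (f_onb : onb f) (f_eig : forall m, f m *m laplacian A = lam m *: f m).

Definition gram d (X : 'M[R]_(n, d)) a b := dotr (f a *m X) (f b *m X).

Lemma energy_onb d (X : 'M[R]_(n, d)) : energy A X = 2 * \sum_m lam m * gram X m m.
Proof.
rewrite energy_trace //.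
have -> : laplacian A = \sum_m lam m *: ((f m)^T *m f m).
  rewrite -[LHS]mul1mx -(onb_sum_outer f_onb) mulmx_suml.
  by apply: eq_bigr => m _; rewrite -mulmxA f_eig scalemxAr.
rewrite mulmx_sumr mulmx_suml raddf_sum; congr (_ * _).
apply: eq_bigr => m _ /=; rewrite -scalemxAr -scalemxAl mxtraceZ /gram /dotr.
by rewrite mulmxA -trmx_mul -mulmxA mxtrace_mulC trace_mx11.
Qed.

Lemma energy_onb_col (y : 'cV[R]_n) :
  energy A y = 2 * \sum_m lam m * dotr (f m) y^T ^+ 2.
Proof.
rewrite energy_onb; congr (_ * _); apply: eq_bigr => m _; congr (_ * _).
by rewrite /gram mulmx_col_dotr /dotr !mxE big_ord1 !mxE eqxx mulr1n expr2.
Qed.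

Lemma energy_plane_rot d (X : 'M[R]_(n, d)) i j c s : i != j -> c ^+ 2 + s ^+ 2 = 1 ->
  energy A (plane_rot f i j c s *m X) = energy A X +
    2 * ((lam j - lam i) * (s ^+ 2 * (gram X i i - gram X j j) - 2 * c * s * gram X i j)).
Proof.
move=> ij cs; have ji : j != i by rewrite eq_sym.
rewrite !energy_onb (bigD1 i) //= (bigD1 j) //= [in RHS](bigD1 i) //= [in RHS](bigD1 j) //=.
under eq_bigr => m /andP[mi mj] do
  rewrite /gram mulmxA onb_mul_plane_rot // (negbTE mi) (negbTE mj).
rewrite /gram !mulmxA !onb_mul_plane_rot // !eqxx (negbTE ji).
rewrite !mulmxDl -!scalemxAl !dotr_lincomb2.
have -> : c ^+ 2 = 1 - s ^+ 2 by rewrite -cs addrK.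
ring.
Qed.

End EnergyEigenbasis.

Lemma cubic_ge0_lincoef_eq0 (R : realFieldType) (a b : R) :
  (forall t : R, 0 <= t ^+ 2 * a - t * (1 - t ^+ 2) * b) -> b = 0.
Proof.
move=> ge0; apply/eqP; apply: contraT => b0; exfalso.
have b2_gt0 : 0 < b ^+ 2 by rewrite exprn_even_gt0.
have K_gt0 : 0 < `|a| + b ^+ 2 + 1 by have := normr_ge0 a; lra.
pose e : R := (`|a| + b ^+ 2 + 1)^-1.
have e_gt0 : 0 < e by rewrite invr_gt0.
have eK : e * `|a| + e * b ^+ 2 + e = 1.
  by rewrite -(mulVf (lt0r_neq0 K_gt0)) -/e; ring.
have ea : e * a <= e * `|a| by apply: ler_wpM2l; [exact: ltW | exact: ler_norm].
have e_le1 : e <= 1 by have := normr_ge0 a; nra.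
have eb : e ^+ 2 * b ^+ 2 <= e * b ^+ 2 by nra.
have := ge0 (e * b).
have -> : (e * b) ^+ 2 * a - e * b * (1 - (e * b) ^+ 2) * b =
  e * b ^+ 2 * (e * a + e ^+ 2 * b ^+ 2 - 1) by ring.
by rewrite pmulr_rge0 ?(mulr_gt0 e_gt0 b2_gt0) //; lra.
Qed.

Section RotationOptimality.
Variables (R : realType) (n d : nat) (A : 'M[R]_n) (H : 'M[R]_(n, d)).
Hypothesis Asym : A^T = A.
Hypothesis H_opt : forall O : 'M[R]_n, O^T *m O = 1%:M -> energy A H <= energy A (O *m H).
Variables (f : 'I_n -> 'rV[R]_n) (lam : 'I_n -> R).
Hypotheses (f_onb : onb f) (f_eig : forall m, f m *m laplacian A = lam m *: f m).
Local Notation G := (gram f H).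

Lemma plane_rot_gain_ge0 i j c s : i != j -> c ^+ 2 + s ^+ 2 = 1 ->
  0 <= (lam j - lam i) * (s ^+ 2 * (G i i - G j j) - 2 * c * s * G i j).
Proof.
move=> ij cs; have := H_opt (plane_rot_orthogonal f_onb ij cs).
by rewrite (energy_plane_rot Asym f_onb f_eig) //; lra.
Qed.

(* With c = (1 - t^2) / (1 + t^2) and s = 2 t / (1 + t^2), the energy gain is
   4 / (1 + t^2)^2 times a cubic in t vanishing at 0, whose slope must vanish. *)
Lemma gram_eq0 i j : lam i != lam j -> G i j = 0.
Proof.
move=> lij; have ij : i != j by apply: contraNneq lij => ->.
have k0 : lam j - lam i != 0 by rewrite subr_eq0 eq_sym.
apply: (mulfI k0); rewrite mulr0.
apply: (@cubic_ge0_lincoef_eq0 _ ((lam j - lam i) * (G i i - G j j))) => t.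
have q_gt0 : 0 < 1 + t ^+ 2 by have := sqr_ge0 t; lra.
have q0 : 1 + t ^+ 2 != 0 by rewrite gt_eqF.
have cs : ((1 - t ^+ 2) / (1 + t ^+ 2)) ^+ 2 + (2 * t / (1 + t ^+ 2)) ^+ 2 = 1.
  by field.
have := plane_rot_gain_ge0 ij cs.
set k := lam j - lam i; set q := 1 + t ^+ 2.
have -> : k * ((2 * t / q) ^+ 2 * (G i i - G j j)
                - 2 * ((1 - t ^+ 2) / q) * (2 * t / q) * G i j)
  = 4 / q ^+ 2 * (t ^+ 2 * (k * (G i i - G j j)) - t * (1 - t ^+ 2) * (k * G i j)).
  by field.
by rewrite pmulr_rge0 // divr_gt0 // exprn_gt0.
Qed.

Lemma gram_le_of_lam_lt i j : lam i < lam j -> G j j <= G i i.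
Proof.
move=> lij; have ij : i != j by apply: contraTneq lij => ->; rewrite ltxx.
have cs : (0 : R) ^+ 2 + 1 ^+ 2 = 1 by rewrite expr0n expr1n add0r.
have := plane_rot_gain_ge0 ij cs.
by rewrite expr1n mul1r !(mulr0, mul0r) subr0 pmulr_rge0 ?subr_gt0 // subr_ge0.
Qed.

End RotationOptimality.

Section Centering.
Variables (R : realType) (n d : nat) (H : 'M[R]_(n.+1, d)).

Definition unit_const : 'rV[R]_n.+1 := const_mx (Num.sqrt n.+1%:R)^-1.

Lemma dotr_unit_const : dotr unit_const unit_const = 1.
Proof.
rewrite dotrE (eq_bigr (fun=> (Num.sqrt n.+1%:R)^-1 ^+ 2)) => [|k _]; last first.
  by rewrite !mxE expr2.
rewrite sumr_const card_ord exprVn sqr_sqrtr //.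
by rewrite -(mulr_natr (n.+1%:R^-1)) mulVf ?pnatr_eq0.
Qed.

Lemma unit_const_mul_laplacian (A : 'M[R]_n.+1) : A^T = A -> unit_const *m laplacian A = 0.
Proof. by move=> Asym; rewrite /unit_const const_mul_laplacian. Qed.

Lemma orth_unit_const_mul_ones (v : 'rV[R]_n.+1) :
  dotr v unit_const = 0 -> v *m const_mx 1 = 0 :> 'M_(1, n.+1).
Proof.
have -> : dotr v unit_const = (Num.sqrt n.+1%:R)^-1 * \sum_j v 0 j.
  by rewrite /dotr mxE mulr_sumr; apply: eq_bigr => j _; rewrite !mxE mulrC.
move=> /eqP; rewrite mulf_eq0 invr_eq0 sqrtr_eq0 lern0 /= => /eqP v_sum.
by apply/rowP => k; rewrite !mxE -[RHS]v_sum; apply: eq_bigr => j _; rewrite mxE mulr1.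
Qed.

Lemma orth_unit_const_centered (v : 'rV[R]_n.+1) :
  dotr v unit_const = 0 -> v *m centered H = v *m H.
Proof.
move=> v_e; rewrite /centered mulmxBr -scalemxAr mulmxA orth_unit_const_mul_ones //.
by rewrite mul0mx scaler0 subr0.
Qed.

Lemma unit_const_centered : unit_const *m centered H = 0.
Proof.
rewrite /centered mulmxBr -scalemxAr mulmxA.
have -> : unit_const *m const_mx 1 = n.+1%:R *: unit_const.
  apply/rowP => k; rewrite !mxE (eq_bigr (fun=> (Num.sqrt n.+1%:R)^-1)) => [|i _].
    by rewrite sumr_const card_ord mulr_natl.
  by rewrite !mxE mulr1.
by rewrite -scalemxAl scalerA mulVf ?pnatr_eq0 // scale1r subrr.
Qed.

Lemma cov_sym : (cov H)^T = cov H.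
Proof. by rewrite /cov trmx_mul trmxK. Qed.

Lemma dotr_mul_cov (v w : 'rV[R]_n.+1) :
  dotr (v *m cov H) w = dotr (v *m centered H) (w *m centered H).
Proof. by rewrite /dotr /cov trmx_mul !mulmxA. Qed.

Lemma unit_const_mul_cov : unit_const *m cov H = 0.
Proof. by rewrite /cov mulmxA unit_const_centered mul0mx. Qed.

End Centering.
Arguments unit_const {R n}.
Arguments dotr_unit_const {R n}.

Section Commutation.
Variables (R : realType) (n d : nat) (A : 'M[R]_n.+1) (H : 'M[R]_(n.+1, d)).
Hypothesis Asym : A^T = A.
Hypothesis H_opt : forall O : 'M[R]_n.+1, O^T *m O = 1%:M -> energy A H <= energy A (O *m H).

Lemma unit_const_stable_laplacian : stablemx unit_const (laplacian A).
Proof. by rewrite unit_const_mul_laplacian ?sub0mx. Qed.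

Lemma laplacian_cov_comm : comm_mx (laplacian A) (cov H).
Proof.
have [f [lam [_ [f_onb f0 f_eig _]]]] := common_eigenbasis (laplacian_sym Asym)
  (laplacian_sym Asym) erefl dotr_unit_const unit_const_stable_laplacian
  unit_const_stable_laplacian.
have f_orth m : m != ord0 -> dotr (f m) unit_const = 0.
  by move=> m0; rewrite -f0 f_onb (negbTE m0).
have cov_f m b : lam m != lam b -> dotr (f m *m cov H) (f b) = 0.
  move=> lmb; rewrite dotr_mul_cov.
  case: (eqVneq m ord0) => [->|m0]; first by rewrite f0 unit_const_centered dotr0l.
  case: (eqVneq b ord0) => [->|b0]; first by rewrite f0 unit_const_centered dotr0r.
  rewrite !orth_unit_const_centered ?f_orth //.
  exact: (gram_eq0 Asym H_opt f_onb f_eig lmb).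
apply: (onb_mx_ext f_onb) => m; rewrite [LHS]mulmxA [RHS]mulmxA f_eig -scalemxAl.
rewrite [f m *m cov H](onb_expansion f_onb) mulmx_suml scaler_sumr.
apply: eq_bigr => b _; rewrite -scalemxAl f_eig !scalerA.
have [->|lmb] := eqVneq (lam m) (lam b); first by rewrite mulrC.
by rewrite cov_f // !(mulr0, mul0r).
Qed.

End Commutation.

Lemma exists_sorting_perm n (r : rel 'I_n.+1) : total r -> transitive r ->
  exists p : {perm 'I_n.+1}, forall a b : 'I_n.+1, (a <= b)%N -> r (p a) (p b).
Proof.
move=> r_total r_trans; have r_refl : reflexive r by move=> a; rewrite -[r a a]orbb.
set s := sort r (enum 'I_n.+1).
have s_size : size s = n.+1 by rewrite size_sort size_enum_ord.
have s_inj : injective (fun a : 'I_n.+1 => nth ord0 s a).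
  move=> a b /eqP; rewrite nth_uniq ?s_size ?sort_uniq ?enum_uniq // => /eqP.
  exact: val_inj.
exists (perm s_inj) => a b ab; rewrite !permE.
by apply: (sorted_leq_nth r_trans r_refl ord0 (sort_sorted r_total _)); rewrite ?inE ?s_size.
Qed.

Lemma ord_neq0_le n (a b : 'I_n.+1) : (a <= b)%N -> a != ord0 -> b != ord0.
Proof. by move=> ab; rewrite -!(inj_eq val_inj) /= -!lt0n => /leq_trans; apply. Qed.

Section Spectrum.
Variables (R : realType) (n d : nat) (A : 'M[R]_n.+1) (H : 'M[R]_(n.+1, d)).
Hypotheses (Asym : A^T = A) (A_ge0 : forall i j, 0 <= A i j).
Hypothesis H_opt : forall O : 'M[R]_n.+1, O^T *m O = 1%:M -> energy A H <= energy A (O *m H).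
Variables (f : 'I_n.+1 -> 'rV[R]_n.+1) (lam mu : 'I_n.+1 -> R).
Hypotheses (f_onb : onb f) (f0 : f ord0 = unit_const).
Hypotheses (f_lap : forall m, f m *m laplacian A = lam m *: f m)
  (f_cov : forall m, f m *m cov H = mu m *: f m).

Lemma onb_orth_unit_const m : m != ord0 -> dotr (f m) unit_const = 0.
Proof. by move=> m0; rewrite -f0 f_onb (negbTE m0). Qed.

Lemma mu_gram m : mu m = dotr (f m *m centered H) (f m *m centered H).
Proof. by rewrite -dotr_mul_cov f_cov dotrZl f_onb eqxx mulr1. Qed.

Lemma mu_ge0 m : 0 <= mu m.
Proof. by rewrite mu_gram dotr_ge0. Qed.

Lemma mu_ord0 : mu ord0 = 0.
Proof. by rewrite mu_gram f0 unit_const_centered dotr0l. Qed.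

Lemma lam_ord0 : lam ord0 = 0.
Proof.
have /(congr1 (fun v => dotr v unit_const)) := f_lap ord0.
by rewrite f0 unit_const_mul_laplacian // dotr0l dotrZl dotr_unit_const mulr1.
Qed.

Lemma energy_onb_vec m : energy A (f m)^T = 2 * lam m.
Proof.
rewrite (energy_onb_col Asym f_onb f_lap) trmxK (bigD1 m) //= big1 => [|k km].
  by rewrite f_onb eqxx expr1n mulr1 addr0.
by rewrite f_onb (negbTE km) expr0n mulr0.
Qed.

Lemma lam_ge0 m : 0 <= lam m.
Proof. by have := energy_ge0 (f m)^T A_ge0; rewrite energy_onb_vec pmulr_rge0. Qed.

Lemma mu_le_of_lam_lt i j : i != ord0 -> j != ord0 -> lam i < lam j -> mu j <= mu i.
Proof.
move=> i0 j0 /(gram_le_of_lam_lt Asym H_opt f_onb f_lap).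
by rewrite /gram !mu_gram !orth_unit_const_centered ?onb_orth_unit_const.
Qed.

(* The key [-1] puts the constant vector first, as [lam >= 0]; ties in [lam] are
   broken by decreasing [mu]. *)
Definition spectral_key (m : 'I_n.+1) : R := if m == ord0 then -1 else lam m.

Definition spectral_order : rel 'I_n.+1 := fun a b =>
  (spectral_key a < spectral_key b) || (spectral_key a == spectral_key b) && (mu b <= mu a).

Lemma spectral_order_total : total spectral_order.
Proof. by move=> a b; rewrite /spectral_order; case: ltgtP => //= _; exact: le_total. Qed.

Lemma spectral_order_trans : transitive spectral_order.
Proof.
move=> b a c; rewrite /spectral_order.
case/orP=> [ab | /andP[/eqP ab ba]] /orP[bc | /andP[/eqP bc cb]].
- by rewrite (lt_trans ab bc).
- by rewrite -bc ab.
- by rewrite ab bc.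
- by rewrite ab bc eqxx (le_trans cb ba) orbT.
Qed.

Variable p : {perm 'I_n.+1}.
Hypothesis p_sorted : forall a b : 'I_n.+1, (a <= b)%N -> spectral_order (p a) (p b).

Lemma perm_sorted_ord0 : p ord0 = ord0.
Proof.
apply/eqP; apply: contraT => p0; have := @p_sorted ord0 ((p^-1)%g ord0) (leq0n _).
rewrite permKV /spectral_order /spectral_key eqxx (negbTE p0).
by have := lam_ge0 (p ord0); case: ltgtP => //; lra.
Qed.

Lemma perm_sorted_neq0 a : a != ord0 -> p a != ord0.
Proof. by rewrite -{2}perm_sorted_ord0 (inj_eq perm_inj). Qed.

Lemma perm_sorted_lam (a b : 'I_n.+1) : (a <= b)%N -> lam (p a) <= lam (p b).
Proof.
have [->|a0] := eqVneq a ord0; first by rewrite perm_sorted_ord0 lam_ord0 lam_ge0.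
move=> ab; have b0 := ord_neq0_le ab a0.
move: (p_sorted ab); rewrite /spectral_order /spectral_key.
rewrite (negbTE (perm_sorted_neq0 a0)) (negbTE (perm_sorted_neq0 b0)).
by case/orP=> [/ltW // | /andP[/eqP-> _]].
Qed.

Lemma perm_sorted_mu (a b : 'I_n.+1) : (a <= b)%N -> a != ord0 -> mu (p b) <= mu (p a).
Proof.
move=> ab a0; have b0 := ord_neq0_le ab a0.
have pa0 := perm_sorted_neq0 a0; have pb0 := perm_sorted_neq0 b0.
move: (p_sorted ab); rewrite /spectral_order /spectral_key (negbTE pa0) (negbTE pb0).
by case/orP=> [/(mu_le_of_lam_lt pa0 pb0) | /andP[]].
Qed.

Definition sorted_eigvec (k : nat) : 'cV[R]_n.+1 := (f (p (inord k.-1)))^T.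

Lemma trmx_mul_onb (a b : 'I_n.+1) : (f a)^T^T *m (f b)^T = (a == b)%:R%:M.
Proof. by rewrite trmxK dotr_mx11 f_onb. Qed.

Lemma sorted_eigvec_unit k : unit_vec (sorted_eigvec k).
Proof. by rewrite /unit_vec trmx_mul_onb eqxx. Qed.

Lemma energy_minimizers_sorted : energy_minimizers A sorted_eigvec.
Proof.
move=> k /andP[k1 kn]; split; first exact: sorted_eigvec_unit.
  move=> j /andP[j1 jk]; rewrite /orth trmx_mul_onb (inj_eq perm_inj).
  rewrite -(inj_eq val_inj) /= !inordK; try lia.
  by rewrite (_ : (j.-1 == k.-1) = false); [apply/matrixP => ? ?; rewrite !mxE mul0rn | lia].
move=> y y_unit y_orth; set a : 'I_n.+1 := inord k.-1.
have va : a = k.-1 :> nat by rewrite /a inordK; lia.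
have y_norm : \sum_b dotr (f (p b)) y^T ^+ 2 = 1.
  have := onb_parseval f_onb y^T; rewrite (reindex_inj (@perm_inj _ p)) /=.
  under eq_bigr do rewrite dotrC; move=> <-.
  by move: y_unit; rewrite /unit_vec mulmx_col_dotr => /matrixP/(_ 0 0); rewrite !mxE.
rewrite /sorted_eigvec -/a energy_onb_vec (energy_onb_col Asym f_onb f_lap).
rewrite (reindex_inj (@perm_inj _ p)) /= ler_pM2l // -[X in X <= _]mulr1 -y_norm mulr_sumr.
apply: ler_sum => b _; have [ba | ab] := ltnP b a; last first.
  by rewrite ler_wpM2r ?sqr_ge0 ?perm_sorted_lam.
have /y_orth : (1 <= b.+1 < k)%N by lia.
rewrite /orth /sorted_eigvec /= inord_val trmxK mulmx_col_dotr => /matrixP/(_ 0 0).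
by rewrite !mxE mulr1n => ->; rewrite expr0n !mulr0.
Qed.

(* [ordS] moves the constant vector, of variance [0], to the last column. *)
Definition sorted_eigbasis : 'M[R]_n.+1 := (\matrix_c f (p (ordS c)))^T.
Definition sorted_cov_spectrum : 'rV[R]_n.+1 := \row_c mu (p (ordS c)).

Lemma sorted_eigbasis_orthogonal : orthogonal_mx sorted_eigbasis.
Proof.
apply/matrixP => a b; rewrite trmxK !mxE -(inj_eq (@ordS_inj _)) -(inj_eq (@perm_inj _ p)).
by rewrite -f_onb /dotr mxE; apply: eq_bigr => r _; rewrite !mxE.
Qed.

Lemma cov_sorted_eigen :
  cov H = sorted_eigbasis *m diag_mx sorted_cov_spectrum *m sorted_eigbasis^T.
Proof.
have UC : sorted_eigbasis^T *m cov H = diag_mx sorted_cov_spectrum *m sorted_eigbasis^T.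
  rewrite mul_diag_mx; apply/row_matrixP => c; rewrite row_mul trmxK rowK f_cov.
  by apply/rowP => r; rewrite !mxE.
by rewrite -mulmxA -UC mulmxA (mulmx1C sorted_eigbasis_orthogonal) mul1mx.
Qed.

Lemma sorted_cov_spectrum_sorted (i j : 'I_n.+1) :
  (i <= j)%N -> sorted_cov_spectrum 0 j <= sorted_cov_spectrum 0 i.
Proof.
move=> ij; rewrite !mxE; have [jn | nj] := ltnP j.+1 n.+1.
  have iS : (i.+1 < n.+1)%N by lia.
  apply: perm_sorted_mu; first by rewrite /= !modn_small.
  by rewrite -(inj_eq val_inj) /= modn_small.
have jn : j.+1 = n.+1 by have := ltn_ord j; lia.
have -> : ordS j = ord0 by apply/val_inj; rewrite /= jn modnn.
by rewrite perm_sorted_ord0 mu_ord0 mu_ge0.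
Qed.

Lemma principal_component_sorted k :
  (1 <= k < n.+1)%N -> principal_component H k (sorted_eigvec k.+1).
Proof.
move=> /andP[k1 kn]; split; first exact: sorted_eigvec_unit.
exists (mu (p (inord k))); split; last first.
  by rewrite /sorted_eigvec -[cov H]cov_sym -trmx_mul f_cov linearZ.
exists sorted_eigbasis, sorted_cov_spectrum; split.
- exact: sorted_eigbasis_orthogonal.
- exact: cov_sorted_eigen.
- exact: sorted_cov_spectrum_sorted.
exists (inord k.-1); split; first by rewrite /= inordK //; lia.
split=> //; rewrite mxE; congr (mu (p _)); apply/val_inj.
by rewrite /= inordK ?modn_small ?inordK //; lia.
Qed.

End Spectrum.

Lemma feasible_mulmx_orthogonal (R : realType) n d s (eps : nat -> R)
    (H : 'M[R]_(n, d)) (O : 'M[R]_n) :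
  orthogonal_mx O -> feasible s eps H -> feasible s eps (O *m H).
Proof.
move=> O_orth H_feas k ks.
have [sigma [[U [S [V [[U_orth V_orth HE S_diag S_sorted] k_S]]]] le_sigma]] := H_feas k ks.
exists sigma; split=> //; exists (O *m U), S, V; split=> //; split=> //.
- by rewrite /orthogonal_mx trmx_mul mulmxA -(mulmxA _ _ O) O_orth mulmx1.
- by rewrite HE !mulmxA.
Qed.

Unset Implicit Arguments.

Theorem theorem2 (R : realType) (n d s : nat) (A : 'M[R]_n) (eps : nat -> R)
    (H : 'M[R]_(n, d)) :
  is_adjacency A ->
  (1 <= d)%N ->
  (s <= (minn n d).-1)%N ->
  (forall i j, (1 <= i)%N -> (i < j)%N -> (j <= s)%N -> eps j < eps i) ->
  (forall k, (1 <= k <= s)%N -> 0 < eps k) ->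
  feasible s eps H ->
  (forall X : 'M[R]_(n, d), feasible s eps X -> energy A H <= energy A X) ->
  exists z : nat -> 'cV[R]_n,
    energy_minimizers A z /\
    forall k, (1 <= k <= s)%N -> principal_component H k (z k.+1).
Proof.
move=> [Asym A01] _ s_le _ _ H_feas H_min.
have {A01} A_ge0 i j : 0 <= A i j by case: (A01 i j) => ->.
case: n => [|n] in A H Asym A_ge0 s_le H_feas H_min *.
  by exists (fun=> 0); split=> k; rewrite min0n in s_le; lia.
have H_opt O : O^T *m O = 1%:M -> energy A H <= energy A (O *m H).
  by move=> O_orth; apply/H_min/feasible_mulmx_orthogonal.
have cov_e : stablemx unit_const (cov H) by rewrite unit_const_mul_cov sub0mx.
have [f [lam [mu [f_onb f0 f_lap f_cov]]]] := common_eigenbasis (laplacian_sym Asym)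
  (cov_sym H) (laplacian_cov_comm Asym H_opt) dotr_unit_const
  (unit_const_stable_laplacian Asym) cov_e.
have [p p_sorted] := exists_sorting_perm (spectral_order_total lam mu)
  (@spectral_order_trans _ _ lam mu).
exists (sorted_eigvec f p); split; first exact: energy_minimizers_sorted p_sorted.
move=> k /andP[k1 ks].
apply: (principal_component_sorted Asym A_ge0 H_opt f_onb f0 f_lap f_cov p_sorted).
by rewrite k1 /=; lia.
Qed.
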